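(* Let $C,D$ be category presentations. The construction $P\mapsto\overline P$, $F\mapsto\overline F$ defines a functor $\overline{(-)}:\mathbf{Curr}(C,D)\to\mathbf{UnCurr}(C,D)$ which preserves provable equality of morphisms (if $F\approx G$ then $\overline F\approx\overline G$) and such that there is an isomorphism $[\![\overline P]\!]\cong[\![P]\!]$ in $\mathbf{Prof}([\![C]\!],[\![D]\!])$, natural in $P\in\mathbf{Curr}(C,D)$. Furthermore, if $C$ and $D$ are finite, $\overline{(-)}$ restricts to a functor $\mathbf{FinCurr}(C,D)\to\mathbf{FinUnCurr}(C,D)$.
   Context: Category presentations $C$: sorts, function symbols $f:c\to c'$, equations $C_E$ between parallel paths; finite if all these are finite sets. $\approx_C$: smallest equivalence relation on paths containing $C_E$ and closed under concatenation with composable function symbols; $[\![C]\!]$: sorts as objects, $\approx_C$-classes of paths as morphisms. Profunctors $\mathcal C\nrightarrow\mathcal D$: categories over $\mathbf 2=\{0\to1\}$ with fibres $\mathcal C,\mathcal D$ (equivalently functors $\mathcal C^{op}\times\mathcal D\to\mathbf{Set}$); $\mathbf{Prof}(\mathcal C,\mathcal D)$: functors over $\mathbf 2$ restricting to identities on $\mathcal C,\mathcal D$. Uncurried presentations $P:C\nrightarrow D$: a set $\mathrm{Fun}(P)$ of symbols $x:c\to d$ ($c$ a $C$-sort, $d$ a $D$-sort) and a set $P_E$ of equations between cross-paths (paths from a $C$-sort to a $D$-sort) in the category presentation $|P|$ with sorts $\mathrm{Sort}(C)+\mathrm{Sort}(D)$, function symbols $\mathrm{Fun}(C)+\mathrm{Fun}(P)+\mathrm{Fun}(D)$,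 equations $C_E+P_E+D_E$; $\approx_P$ is $\approx_{|P|}$ restricted to cross-paths. Morphisms $F:P\to P'$ send each $x:c\to d$ to a cross-path $F(x):c\to d$ of $P'$ such that the extension $|F|$ (identity on $C$ and $D$) sends every equation of $|P|$ to a $\approx_{|P'|}$-provable equality; $F\approx F'$ iff $F(x)\approx_{P'}F'(x)$ for all $x$. Category $\mathbf{UnCurr}(C,D)$; $\mathbf{FinUnCurr}(C,D)$ the full subcategory with $\mathrm{Fun}(P)$, $P_E$ finite. Semantics $[\![P]\!]=[\![|P|]\!]$ over $\mathbf 2$ ($C$-sorts over $0$), $[\![F]\!]=[\![|F|]\!]$. Instance presentations: a $D$-instance presentation $I$ has generators $x:d$ and equations between terms $x.g$ ($g$ a $D$-path); $\approx_I$ is the smallest equivalence relation on terms containing $I_E$, closed under right concatenation with $D$-function symbols, identifying $t.p,t.q$ for equations $p=q$ of $D_E$. Morphisms $F:I\to J$ send generators $x:d$ to terms $F(x):d$ respecting equations up to $\approx_J$; $F(x.g):=F(x).g$; $F\approx G$ iff $F(x)\approx_J G(x)$. Curried presentations $P:C\nrightarrow D$: $D$-instance presentations $P(c)$ for sorts $c$, $D$-instance morphisms $P(f):P(c')\to P(c)$ for function symbols $f:c\to c'$, with $P(p)\approx P(p')$ for equations $p=p'$ of $C_E$ ($P(f_1.\cdots.f_n):=P(f_n)\circ\cdots\circ P(f_1)$). Morphisms: families $F_c:P(c)\to P'(c)$ with $F_c\circ P(f)\approx P'(f)\circ F_{c'}$; category $\mathbf{Curr}(C,D)$; $F\approx G$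 iff $F_c\approx G_c$ for all $c$; $\mathbf{FinCurr}(C,D)$ the full subcategory where all $P(c)$ are finite. Semantics: $[\![P]\!](c,d)=\{\approx_{P(c)}\text{-classes of terms of type } d\}$, $[f]$ acting by $[t]\mapsto[P(f)(t)]$ and $[g]$ by $[t]\mapsto[t.g]$. Uncurrying: for a curried $P$, $\overline P$ is the uncurried presentation $C\nrightarrow D$ with a symbol $\overline p:c\to d$ for each sort $c$ of $C$ and each generator $p:d$ of $P(c)$; for terms set $\overline{p.g}:=\overline p.g$; equations: $\overline t=\overline{t'}$ for each sort $c$ and equation $t=t'$ of $P(c)$, and $f.\overline p=\overline{P(f)(p)}$ for each function symbol $f:c\to c'$ of $C$ and generator $p$ of $P(c')$. For a morphism $F$, $\overline F(\overline p):=\overline{F_c(p)}$. *)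

From Stdlib Require Import List.
Import ListNotations.

Definition Finite_type (T : Type) : Prop :=
  exists l : list T, forall x : T, In x l.

(* Typed paths f1.f2...fn (diagrammatic order) in a graph given by
   dom, cod : F -> S.  [pnil c] is the empty path at c.                *)
Inductive path {S F : Type} (dom cod : F -> S) : S -> S -> Type :=
| pnil : forall c : S, path dom cod c c
| pcons : forall (f : F) (c' : S), path dom cod (cod f) c' -> path dom cod (dom f) c'.
Arguments pnil {S F dom cod} c.
Arguments pcons {S F dom cod} f {c'} _.

Fixpoint papp {S F : Type} {dom cod : F -> S} {a b c : S}
  (p : path dom cod a b) : path dom cod b c -> path dom cod a c :=
  match p in path _ _ a0 b0 return path dom cod b0 c -> path dom cod a0 c with
  | pnil _ => fun q => q
  | @pcons _ _ _ _ f _ p' => fun q => pcons f (papp p' q)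
  end.

Definition psym {S F : Type} {dom cod : F -> S} (g : F) : path dom cod (dom g) (cod g) :=
  pcons g (pnil (cod g)).

Record CatPres := mkCatPres {
  Sort : Type;
  Fn : Type;
  dom : Fn -> Sort;
  cod : Fn -> Sort;
  Eqn : Type;
  eqn_src : Eqn -> Sort;
  eqn_tgt : Eqn -> Sort;
  eqn_lhs : forall e : Eqn, path dom cod (eqn_src e) (eqn_tgt e);
  eqn_rhs : forall e : Eqn, path dom cod (eqn_src e) (eqn_tgt e) }.
Arguments dom {c} _.
Arguments cod {c} _.
Arguments eqn_src {c} _.
Arguments eqn_tgt {c} _.
Arguments eqn_lhs {c} _.
Arguments eqn_rhs {c} _.

Definition Path (C : CatPres) : Sort C -> Sort C -> Type := path (@dom C) (@cod C).

Definition fin_cat (C : CatPres) : Prop :=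
  Finite_type (Sort C) /\ Finite_type (Fn C) /\ Finite_type (Eqn C).

Inductive peq (C : CatPres) : forall c c' : Sort C, Path C c c' -> Path C c c' -> Prop :=
| peq_ax : forall e : Eqn C, peq C (eqn_src e) (eqn_tgt e) (eqn_lhs e) (eqn_rhs e)
| peq_refl : forall c c' (p : Path C c c'), peq C c c' p p
| peq_sym : forall c c' (p q : Path C c c'), peq C c c' p q -> peq C c c' q p
| peq_trans : forall c c' (p q r : Path C c c'),
    peq C c c' p q -> peq C c c' q r -> peq C c c' p r
| peq_pre : forall (f : Fn C) c' (p q : Path C (cod f) c'),
    peq C (cod f) c' p q -> peq C (dom f) c' (pcons f p) (pcons f q)
| peq_post : forall c (g : Fn C) (p q : Path C c (dom g)),
    peq C c (dom g) p q -> peq C c (cod g) (papp p (psym g)) (papp q (psym g)).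

(* The presentation |P| with sorts Sort C + Sort D and symbols
   Fun C + X + Fun D, for a set X of cross symbols x : xd x -> xc x.    *)
Definition TSym (C D : CatPres) (X : Type) : Type := ((Fn C + X) + Fn D)%type.

Definition tdom (C D : CatPres) {X : Type} (xd : X -> Sort C) (s : TSym C D X)
  : (Sort C + Sort D)%type :=
  match s with
  | inl (inl f) => inl (dom f)
  | inl (inr x) => inl (xd x)
  | inr g => inr (dom g)
  end.

Definition tcod (C D : CatPres) {X : Type} (xc : X -> Sort D) (s : TSym C D X)
  : (Sort C + Sort D)%type :=
  match s with
  | inl (inl f) => inl (cod f)
  | inl (inr x) => inr (xc x)
  | inr g => inr (cod g)
  end.

Definition TPath (C D : CatPres) {X : Type} (xd : X -> Sort C) (xc : X -> Sort D)
  : (Sort C + Sort D)%type -> (Sort C + Sort D)%type -> Type :=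
  path (tdom C D xd) (tcod C D xc).

Fixpoint liftC (C D : CatPres) {X : Type} (xd : X -> Sort C) (xc : X -> Sort D)
  {c c' : Sort C} (p : Path C c c') : TPath C D xd xc (inl c) (inl c') :=
  match p in path _ _ a b return TPath C D xd xc (inl a) (inl b) with
  | pnil a => pnil (inl a)
  | @pcons _ _ _ _ f _ p' =>
      @pcons _ _ (tdom C D xd) (tcod C D xc) (inl (inl f)) _ (liftC C D xd xc p')
  end.

Fixpoint liftD (C D : CatPres) {X : Type} (xd : X -> Sort C) (xc : X -> Sort D)
  {d d' : Sort D} (p : Path D d d') : TPath C D xd xc (inr d) (inr d') :=
  match p in path _ _ a b return TPath C D xd xc (inr a) (inr b) with
  | pnil a => pnil (inr a)
  | @pcons _ _ _ _ g _ p' =>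
      @pcons _ _ (tdom C D xd) (tcod C D xc) (inr g) _ (liftD C D xd xc p')
  end.

Record UnCurr (C D : CatPres) := mkUnCurr {
  ufn : Type;
  udom : ufn -> Sort C;
  ucod : ufn -> Sort D;
  ueqn : Type;
  ueqn_src : ueqn -> Sort C;
  ueqn_tgt : ueqn -> Sort D;
  ueqn_lhs : forall e : ueqn, TPath C D udom ucod (inl (ueqn_src e)) (inr (ueqn_tgt e));
  ueqn_rhs : forall e : ueqn, TPath C D udom ucod (inl (ueqn_src e)) (inr (ueqn_tgt e)) }.
Arguments ufn {C D} _.
Arguments udom {C D} _ _.
Arguments ucod {C D} _ _.
Arguments ueqn {C D} _.
Arguments ueqn_src {C D} _ _.
Arguments ueqn_tgt {C D} _ _.
Arguments ueqn_lhs {C D} _ _.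
Arguments ueqn_rhs {C D} _ _.

Definition UPath {C D : CatPres} (P : UnCurr C D) := TPath C D (udom P) (ucod P).

Definition fin_uncurr {C D : CatPres} (P : UnCurr C D) : Prop :=
  Finite_type (ufn P) /\ Finite_type (ueqn P).

Definition tot_src {C D : CatPres} (P : UnCurr C D) (e : ((Eqn C + ueqn P) + Eqn D)%type)
  : (Sort C + Sort D)%type :=
  match e with
  | inl (inl e) => inl (eqn_src e)
  | inl (inr e) => inl (ueqn_src P e)
  | inr e => inr (eqn_src e)
  end.

Definition tot_tgt {C D : CatPres} (P : UnCurr C D) (e : ((Eqn C + ueqn P) + Eqn D)%type)
  : (Sort C + Sort D)%type :=
  match e with
  | inl (inl e) => inl (eqn_tgt e)
  | inl (inr e) => inr (ueqn_tgt P e)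
  | inr e => inr (eqn_tgt e)
  end.

Definition tot_lhs {C D : CatPres} (P : UnCurr C D) (e : ((Eqn C + ueqn P) + Eqn D)%type)
  : UPath P (tot_src P e) (tot_tgt P e) :=
  match e as e0 return UPath P (tot_src P e0) (tot_tgt P e0) with
  | inl (inl e) => liftC C D (udom P) (ucod P) (eqn_lhs e)
  | inl (inr e) => ueqn_lhs P e
  | inr e => liftD C D (udom P) (ucod P) (eqn_lhs e)
  end.

Definition tot_rhs {C D : CatPres} (P : UnCurr C D) (e : ((Eqn C + ueqn P) + Eqn D)%type)
  : UPath P (tot_src P e) (tot_tgt P e) :=
  match e as e0 return UPath P (tot_src P e0) (tot_tgt P e0) with
  | inl (inl e) => liftC C D (udom P) (ucod P) (eqn_rhs e)
  | inl (inr e) => ueqn_rhs P e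
  | inr e => liftD C D (udom P) (ucod P) (eqn_rhs e)
  end.

Definition tot {C D : CatPres} (P : UnCurr C D) : CatPres :=
  @mkCatPres (Sort C + Sort D)%type (TSym C D (ufn P))
    (tdom C D (udom P)) (tcod C D (ucod P))
    ((Eqn C + ueqn P) + Eqn D)%type (tot_src P) (tot_tgt P) (tot_lhs P) (tot_rhs P).

Definition ueq {C D : CatPres} (P : UnCurr C D) (c : Sort C) (d : Sort D)
  (u v : UPath P (inl c) (inr d)) : Prop :=
  peq (tot P) (inl c) (inr d) u v.

Definition UMor {C D : CatPres} (P P' : UnCurr C D) : Type :=
  forall x : ufn P, UPath P' (inl (udom P x)) (inr (ucod P x)).

Fixpoint uext {C D : CatPres} {P P' : UnCurr C D} (F : UMor P P')
  {a b : (Sort C + Sort D)%type} (p : UPath P a b) : UPath P' a b :=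
  match p in path _ _ a0 b0 return UPath P' a0 b0 with
  | pnil a0 => pnil a0
  | @pcons _ _ _ _ s b0 p' =>
      (match s as s0 return UPath P' (tcod C D (ucod P) s0) b0 ->
                            UPath P' (tdom C D (udom P) s0) b0 with
       | inl (inl f) => fun q =>
           @pcons _ _ (tdom C D (udom P')) (tcod C D (ucod P')) (inl (inl f)) _ q
       | inl (inr x) => fun q => papp (F x) q
       | inr g => fun q =>
           @pcons _ _ (tdom C D (udom P')) (tcod C D (ucod P')) (inr g) _ q
       end) (uext F p')
  end.

Definition umor_ok {C D : CatPres} {P P' : UnCurr C D} (F : UMor P P') : Prop :=
  forall e : Eqn (tot P),
    peq (tot P') (eqn_src e) (eqn_tgt e) (uext F (eqn_lhs e)) (uext F (eqn_rhs e)).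

Definition umor_eq {C D : CatPres} {P P' : UnCurr C D} (F G : UMor P P') : Prop :=
  forall x : ufn P, ueq P' (udom P x) (ucod P x) (F x) (G x).

Definition uid {C D : CatPres} (P : UnCurr C D) : UMor P P :=
  fun x => @pcons _ _ (tdom C D (udom P)) (tcod C D (ucod P)) (inl (inr x)) _
             (pnil (inr (ucod P x))).

Definition ucomp {C D : CatPres} {P P' P'' : UnCurr C D}
  (G : UMor P' P'') (F : UMor P P') : UMor P P'' :=
  fun x => uext G (F x).

Record Term (D : CatPres) {G : Type} (gs : G -> Sort D) (d : Sort D) := mkTerm {
  tgen : G;
  tpath : Path D (gs tgen) d }.
Arguments mkTerm {D G gs d} _ _.
Arguments tgen {D G gs d} _.
Arguments tpath {D G gs d} _.

Record Inst (D : CatPres) := mkInst {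
  gen : Type;
  gsort : gen -> Sort D;
  ieqn : Type;
  ieqn_ty : ieqn -> Sort D;
  ieqn_lhs : forall e : ieqn, Term D gsort (ieqn_ty e);
  ieqn_rhs : forall e : ieqn, Term D gsort (ieqn_ty e) }.
Arguments gen {D} _.
Arguments gsort {D} _ _.
Arguments ieqn {D} _.
Arguments ieqn_ty {D} _ _.
Arguments ieqn_lhs {D} _ _.
Arguments ieqn_rhs {D} _ _.

Definition ITerm {D : CatPres} (I : Inst D) (d : Sort D) : Type := Term D (gsort I) d.

Definition fin_inst {D : CatPres} (I : Inst D) : Prop :=
  Finite_type (gen I) /\ Finite_type (ieqn I).

Definition tapp {D : CatPres} {G : Type} {gs : G -> Sort D} {d d' : Sort D}
  (t : Term D gs d) (q : Path D d d') : Term D gs d' :=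
  mkTerm (tgen t) (papp (tpath t) q).

Definition tgenerator {D : CatPres} (I : Inst D) (x : gen I) : ITerm I (gsort I x) :=
  mkTerm x (pnil (gsort I x)).

Inductive teq {D : CatPres} (I : Inst D) : forall d : Sort D, ITerm I d -> ITerm I d -> Prop :=
| teq_ax : forall e : ieqn I, teq I (ieqn_ty I e) (ieqn_lhs I e) (ieqn_rhs I e)
| teq_D : forall (e : Eqn D) (t : ITerm I (eqn_src e)),
    teq I (eqn_tgt e) (tapp t (eqn_lhs e)) (tapp t (eqn_rhs e))
| teq_refl : forall d (t : ITerm I d), teq I d t t
| teq_sym : forall d (t u : ITerm I d), teq I d t u -> teq I d u t
| teq_trans : forall d (t u v : ITerm I d), teq I d t u -> teq I d u v -> teq I d t v
| teq_post : forall (g : Fn D) (t u : ITerm I (dom g)),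
    teq I (dom g) t u -> teq I (cod g) (tapp t (psym g)) (tapp u (psym g)).

Definition IMor {D : CatPres} (I J : Inst D) : Type :=
  forall x : gen I, ITerm J (gsort I x).

Definition iext {D : CatPres} {I J : Inst D} (F : IMor I J) {d : Sort D}
  (t : ITerm I d) : ITerm J d :=
  tapp (F (tgen t)) (tpath t).

Definition imor_ok {D : CatPres} {I J : Inst D} (F : IMor I J) : Prop :=
  forall e : ieqn I, teq J (ieqn_ty I e) (iext F (ieqn_lhs I e)) (iext F (ieqn_rhs I e)).

Definition imor_eq {D : CatPres} {I J : Inst D} (F G : IMor I J) : Prop :=
  forall x : gen I, teq J (gsort I x) (F x) (G x).

Definition iid {D : CatPres} (I : Inst D) : IMor I I := fun x => tgenerator I x.

Definition icomp {D : CatPres} {I J K : Inst D} (G : IMor J K) (F : IMor I J) : IMor I K :=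
  fun x => iext G (F x).

Record Curr (C D : CatPres) := mkCurr {
  cinst : Sort C -> Inst D;
  cact : forall f : Fn C, IMor (cinst (cod f)) (cinst (dom f)) }.
Arguments cinst {C D} _ _.
Arguments cact {C D} _ _.

(* P(f1. ... .fn) : P(c') -> P(c) for a path c -> c' (apply P(fn) first) *)
Fixpoint cpath {C D : CatPres} (P : Curr C D) {c c' : Sort C} (p : Path C c c')
  : IMor (cinst P c') (cinst P c) :=
  match p in path _ _ a b return IMor (cinst P b) (cinst P a) with
  | pnil a => iid (cinst P a)
  | @pcons _ _ _ _ f _ p' => icomp (cact P f) (cpath P p')
  end.

Definition curr_ok {C D : CatPres} (P : Curr C D) : Prop :=
  (forall f : Fn C, imor_ok (cact P f)) /\
  (forall e : Eqn C, imor_eq (cpath P (eqn_lhs e)) (cpath P (eqn_rhs e))).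

Definition CMor {C D : CatPres} (P P' : Curr C D) : Type :=
  forall c : Sort C, IMor (cinst P c) (cinst P' c).

Definition cmor_ok {C D : CatPres} {P P' : Curr C D} (F : CMor P P') : Prop :=
  (forall c : Sort C, imor_ok (F c)) /\
  (forall f : Fn C, imor_eq (icomp (F (dom f)) (cact P f)) (icomp (cact P' f) (F (cod f)))).

Definition cmor_eq {C D : CatPres} {P P' : Curr C D} (F G : CMor P P') : Prop :=
  forall c : Sort C, imor_eq (F c) (G c).

Definition cid {C D : CatPres} (P : Curr C D) : CMor P P := fun c => iid (cinst P c).

Definition ccomp {C D : CatPres} {P P' P'' : Curr C D} (G : CMor P' P'') (F : CMor P P')
  : CMor P P'' := fun c => icomp (G c) (F c).

Definition ubar_fn {C D : CatPres} (P : Curr C D) : Type :=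
  {c : Sort C & gen (cinst P c)}.
Definition ubar_dom {C D : CatPres} (P : Curr C D) (x : ubar_fn P) : Sort C := projT1 x.
Definition ubar_cod {C D : CatPres} (P : Curr C D) (x : ubar_fn P) : Sort D :=
  gsort (cinst P (projT1 x)) (projT2 x).

Definition tbar {C D : CatPres} (P : Curr C D) {c : Sort C} {d : Sort D}
  (t : ITerm (cinst P c) d) : TPath C D (ubar_dom P) (ubar_cod P) (inl c) (inr d) :=
  @pcons _ _ (tdom C D (ubar_dom P)) (tcod C D (ubar_cod P))
    (inl (inr (existT (fun c0 => gen (cinst P c0)) c (tgen t)))) _
    (liftD C D (ubar_dom P) (ubar_cod P) (tpath t)).

Definition ubar_eqn {C D : CatPres} (P : Curr C D) : Type :=
  ({c : Sort C & ieqn (cinst P c)} + {f : Fn C & gen (cinst P (cod f))})%type.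

Definition ubar_src {C D : CatPres} (P : Curr C D) (e : ubar_eqn P) : Sort C :=
  match e with
  | inl (existT _ c _) => c
  | inr (existT _ f _) => dom f
  end.

Definition ubar_tgt {C D : CatPres} (P : Curr C D) (e : ubar_eqn P) : Sort D :=
  match e with
  | inl (existT _ c e0) => ieqn_ty (cinst P c) e0
  | inr (existT _ f p) => gsort (cinst P (cod f)) p
  end.

(* equations: overline t = overline t'  and  f.overline p = overline (P(f)(p)) *)
Definition ubar_lhs {C D : CatPres} (P : Curr C D) (e : ubar_eqn P)
  : TPath C D (ubar_dom P) (ubar_cod P) (inl (ubar_src P e)) (inr (ubar_tgt P e)) :=
  match e as e1 return TPath C D (ubar_dom P) (ubar_cod P) (inl (ubar_src P e1)) (inr (ubar_tgt P e1)) with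
  | inl (existT _ c e0) => tbar P (ieqn_lhs (cinst P c) e0)
  | inr (existT _ f p) =>
      @pcons _ _ (tdom C D (ubar_dom P)) (tcod C D (ubar_cod P)) (inl (inl f)) _
        (tbar P (tgenerator (cinst P (cod f)) p))
  end.

Definition ubar_rhs {C D : CatPres} (P : Curr C D) (e : ubar_eqn P)
  : TPath C D (ubar_dom P) (ubar_cod P) (inl (ubar_src P e)) (inr (ubar_tgt P e)) :=
  match e as e1 return TPath C D (ubar_dom P) (ubar_cod P) (inl (ubar_src P e1)) (inr (ubar_tgt P e1)) with
  | inl (existT _ c e0) => tbar P (ieqn_rhs (cinst P c) e0)
  | inr (existT _ f p) => tbar P (cact P f p)
  end.

Definition Pbar {C D : CatPres} (P : Curr C D) : UnCurr C D :=
  @mkUnCurr C D (ubar_fn P) (ubar_dom P) (ubar_cod P)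
    (ubar_eqn P) (ubar_src P) (ubar_tgt P) (ubar_lhs P) (ubar_rhs P).

Definition ubar_mor {C D : CatPres} {P P' : Curr C D} (F : CMor P P') : UMor (Pbar P) (Pbar P') :=
  fun x => tbar P' (F (projT1 x) (projT2 x)).

(* A profunctor presented by P is a category
   over 2; a morphism in Prof([[C]],[[D]]) is the identity on [[C]] and
   [[D]], so it is determined by its action on cross morphisms c -> d,
   and must commute with pre-/post-composition by morphisms of [[C]],
   [[D]] (classes of C-paths / D-paths).  Classes are represented by
   representatives together with the relevant provable equality.        *)

Definition uact {C D : CatPres} (P : UnCurr C D) {c' c : Sort C} {d d' : Sort D}
  (p : Path C c' c) (u : UPath P (inl c) (inr d)) (q : Path D d d')
  : UPath P (inl c') (inr d') :=
  papp (liftC C D (udom P) (ucod P) p) (papp u (liftD C D (udom P) (ucod P) q)).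

Definition cact_t {C D : CatPres} (P : Curr C D) {c' c : Sort C} {d d' : Sort D}
  (p : Path C c' c) (t : ITerm (cinst P c) d) (q : Path D d d') : ITerm (cinst P c') d' :=
  tapp (iext (cpath P p) t) q.

Definition prof_iso {C D : CatPres} (P : Curr C D)
  (alpha : forall c d, UPath (Pbar P) (inl c) (inr d) -> ITerm (cinst P c) d)
  (beta : forall c d, ITerm (cinst P c) d -> UPath (Pbar P) (inl c) (inr d)) : Prop :=
  (forall c d (u v : UPath (Pbar P) (inl c) (inr d)),
      ueq (Pbar P) c d u v -> teq (cinst P c) d (alpha c d u) (alpha c d v)) /\
  (forall c d (t t' : ITerm (cinst P c) d),
      teq (cinst P c) d t t' -> ueq (Pbar P) c d (beta c d t) (beta c d t')) /\
  (forall c d (u : UPath (Pbar P) (inl c) (inr d)),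
      ueq (Pbar P) c d (beta c d (alpha c d u)) u) /\
  (forall c d (t : ITerm (cinst P c) d),
      teq (cinst P c) d (alpha c d (beta c d t)) t) /\
  (forall c c' d d' (p : Path C c' c) (q : Path D d d') (u : UPath (Pbar P) (inl c) (inr d)),
      teq (cinst P c') d' (alpha c' d' (uact (Pbar P) p u q)) (cact_t P p (alpha c d u) q)).

(* Uncurrying only changes the presentation.  Interpreting a path of |P̄| in the
   curried semantics (C-symbols act through P(f), a symbol p̄ yields the
   generator p, D-symbols extend terms) respects provable equality, and this
   interpretation is inverse, up to provable equality, to t ↦ t̄.  Since
   F̄ commutes with t ↦ t̄ on the nose, the resulting isomorphism
   [[P̄]] ≅ [[P]] is natural in P. *)
From Stdlib Require Import List.
Import ListNotations.

Section Paths.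
Context {S F : Type} {dm cd : F -> S}.

Lemma papp_pnil_r {a b : S} (p : path dm cd a b) : papp p (pnil b) = p.
Proof. induction p; simpl; [reflexivity | now rewrite IHp]. Qed.

Lemma papp_assoc {a b c e : S} (p : path dm cd a b) (q : path dm cd b c)
  (r : path dm cd c e) : papp (papp p q) r = papp p (papp q r).
Proof. induction p; simpl; [reflexivity | now rewrite IHp]. Qed.

End Paths.

Lemma peq_papp_l (C : CatPres) {a b c : Sort C} (r : Path C a b) (p q : Path C b c) :
  peq C b c p q -> peq C a c (papp r p) (papp r q).
Proof. induction r; simpl; intros H; [exact H | apply peq_pre; auto]. Qed.

Lemma peq_papp_r (C : CatPres) {b c : Sort C} (r : Path C b c) :
  forall a (p q : Path C a b), peq C a b p q -> peq C a c (papp p r) (papp q r).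
Proof.
  induction r as [b | g c' r IH]; intros a p q H.
  - rewrite !papp_pnil_r; exact H.
  - change (pcons g r) with (papp (psym (dom := @dom C) (cod := @cod C) g) r).
    rewrite <- !papp_assoc. apply IH, peq_post, H.
Qed.

Section Instances.
Context {D : CatPres}.

Lemma tapp_tapp {G : Type} {gs : G -> Sort D} {d d' d'' : Sort D}
  (t : Term D gs d) (p : Path D d d') (q : Path D d' d'') :
  tapp (tapp t p) q = tapp t (papp p q).
Proof. destruct t; unfold tapp; simpl; now rewrite papp_assoc. Qed.

Lemma tapp_pnil {G : Type} {gs : G -> Sort D} {d : Sort D} (t : Term D gs d) :
  tapp t (pnil d) = t.
Proof. destruct t; unfold tapp; simpl; now rewrite papp_pnil_r. Qed.

Lemma teq_tapp (I : Inst D) {d d' : Sort D} (q : Path D d d') :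
  forall t u : ITerm I d, teq I d t u -> teq I d' (tapp t q) (tapp u q).
Proof.
  induction q as [d | g c' q IH]; intros t u H.
  - rewrite !tapp_pnil; exact H.
  - change (pcons g q) with (papp (psym (dom := @dom D) (cod := @cod D) g) q).
    rewrite <- !tapp_tapp. apply IH, teq_post, H.
Qed.

Lemma peq_teq (I : Inst D) {d d' : Sort D} (p q : Path D d d') :
  peq D d d' p q -> forall t : ITerm I d, teq I d' (tapp t p) (tapp t q).
Proof.
  induction 1; intros t.
  - apply teq_D.
  - apply teq_refl.
  - apply teq_sym; auto.
  - eapply teq_trans; eauto.
  - change (pcons f p) with (papp (psym (dom := @dom D) (cod := @cod D) f) p).
    change (pcons f q) with (papp (psym (dom := @dom D) (cod := @cod D) f) q).
    rewrite <- !tapp_tapp. apply IHpeq.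
  - rewrite <- !tapp_tapp. apply teq_post, IHpeq.
Qed.

Lemma iext_tapp {I J : Inst D} (F : IMor I J) {d d' : Sort D} (t : ITerm I d)
  (q : Path D d d') : iext F (tapp t q) = tapp (iext F t) q.
Proof. destruct t; unfold iext, tapp; simpl. symmetry. apply tapp_tapp. Qed.

Lemma iext_icomp {I J K : Inst D} (G : IMor J K) (F : IMor I J) {d : Sort D}
  (t : ITerm I d) : iext (icomp G F) t = iext G (iext F t).
Proof. destruct t; unfold icomp, iext at 1 3; simpl. now rewrite <- iext_tapp. Qed.

Lemma iext_iid {I : Inst D} {d : Sort D} (t : ITerm I d) : iext (iid I) t = t.
Proof. destruct t; reflexivity. Qed.

Lemma iext_teq {I J : Inst D} (F : IMor I J) : imor_ok F ->
  forall d (t u : ITerm I d), teq I d t u -> teq J d (iext F t) (iext F u).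
Proof.
  intros HF d t u H; induction H.
  - apply HF.
  - rewrite !iext_tapp. apply teq_D.
  - apply teq_refl.
  - apply teq_sym; auto.
  - eapply teq_trans; eauto.
  - rewrite !iext_tapp. apply teq_post; auto.
Qed.

Lemma imor_eq_iext {I J : Inst D} (F G : IMor I J) : imor_eq F G ->
  forall d (t : ITerm I d), teq J d (iext F t) (iext G t).
Proof. intros H d t. apply teq_tapp, H. Qed.

Lemma iid_ok (I : Inst D) : imor_ok (iid I).
Proof. intros e. rewrite !iext_iid. apply teq_ax. Qed.

Lemma icomp_ok {I J K : Inst D} (G : IMor J K) (F : IMor I J) :
  imor_ok G -> imor_ok F -> imor_ok (icomp G F).
Proof. intros HG HF e. rewrite !iext_icomp. apply iext_teq; auto. Qed.

End Instances.

Lemma cpath_ok {C D : CatPres} (P : Curr C D) : curr_ok P ->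
  forall c c' (p : Path C c c'), imor_ok (cpath P p).
Proof.
  intros HP c c' p; induction p; simpl; [apply iid_ok | apply icomp_ok; auto; apply HP].
Qed.

Section Uncurried.
Context {C D : CatPres}.

Lemma liftD_papp {X : Type} (xd : X -> Sort C) (xc : X -> Sort D) {a b c : Sort D}
  (p : Path D a b) (q : Path D b c) :
  liftD C D xd xc (papp p q) = papp (liftD C D xd xc p) (liftD C D xd xc q).
Proof. induction p; simpl; [reflexivity | now rewrite IHp]. Qed.

Context {P P' : UnCurr C D} (F : UMor P P').

Lemma uext_liftC {c c' : Sort C} (p : Path C c c') :
  uext F (liftC C D (udom P) (ucod P) p) = liftC C D (udom P') (ucod P') p.
Proof. induction p; simpl; [reflexivity | now rewrite IHp]. Qed.

Lemma uext_liftD {d d' : Sort D} (q : Path D d d') :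
  uext F (liftD C D (udom P) (ucod P) q) = liftD C D (udom P') (ucod P') q.
Proof. induction q; simpl; [reflexivity | now rewrite IHq]. Qed.

Lemma uext_papp {a b c} (p : UPath P a b) (q : UPath P b c) :
  uext F (papp p q) = papp (uext F p) (uext F q).
Proof.
  induction p as [a | [[f | x] | g] b p IH]; simpl; rewrite ?IH; try reflexivity.
  now rewrite papp_assoc.
Qed.

Lemma uext_peq : umor_ok F ->
  forall a b (u v : UPath P a b), peq (tot P) a b u v -> peq (tot P') a b (uext F u) (uext F v).
Proof.
  intros HF a b u v H; induction H.
  - apply HF.
  - apply peq_refl.
  - apply peq_sym; auto.
  - eapply peq_trans; eauto.
  - destruct f as [[f | x] | g]; simpl.
    + now apply (peq_pre (tot P') (inl (inl f))).
    + now apply peq_papp_l.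
    + now apply (peq_pre (tot P') (inr g)).
  - rewrite !uext_papp. now apply peq_papp_r.
Qed.

End Uncurried.

Section Uncurrying.
Context {C D : CatPres} (P : Curr C D).

Lemma tbar_tapp {c : Sort C} {d d' : Sort D} (t : ITerm (cinst P c) d) (q : Path D d d') :
  tbar P (tapp t q) = papp (tbar P t) (liftD C D (ubar_dom P) (ubar_cod P) q).
Proof. destruct t; unfold tbar, tapp; simpl. now rewrite liftD_papp. Qed.

Lemma tbar_teq {c : Sort C} {d : Sort D} (t u : ITerm (cinst P c) d) :
  teq (cinst P c) d t u -> ueq (Pbar P) c d (tbar P t) (tbar P u).
Proof.
  unfold ueq. induction 1.
  - exact (peq_ax (tot (Pbar P)) (inl (inr (inl (existT _ c e))))).
  - rewrite !tbar_tapp. apply peq_papp_l.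
    exact (peq_ax (tot (Pbar P)) (inr e)).
  - apply peq_refl.
  - apply peq_sym; auto.
  - eapply peq_trans; eauto.
  - rewrite !tbar_tapp. now apply peq_papp_r.
Qed.

Lemma tbar_cact (f : Fn C) {d : Sort D} (t : ITerm (cinst P (cod f)) d) :
  ueq (Pbar P) (dom f) d
    (@pcons _ _ (tdom C D (ubar_dom P)) (tcod C D (ubar_cod P)) (inl (inl f)) _ (tbar P t))
    (tbar P (iext (cact P f) t)).
Proof.
  destruct t as [x q]. unfold iext; simpl. rewrite tbar_tapp.
  exact (peq_papp_r (tot (Pbar P)) (liftD C D (ubar_dom P) (ubar_cod P) q) _ _ _
           (peq_ax (tot (Pbar P)) (inl (inr (inr (existT _ f x)))))).
Qed.

(* The semantics [[P]] as a category over 2, modelled concretely: an arrow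
   c -> c' of the C-fibre is the instance morphism P(c') -> P(c) it acts by,
   an arrow c -> d is a term of P(c) of type d, and a D-arrow is a D-path;
   [SemRel] is the corresponding notion of equality. *)
Definition SemHom (a b : (Sort C + Sort D)%type) : Type :=
  match a, b with
  | inl c, inl c' => IMor (cinst P c') (cinst P c)
  | inl c, inr d => ITerm (cinst P c) d
  | inr d, inr d' => Path D d d'
  | inr _, inl _ => Empty_set
  end.

Definition SemRel (a b : (Sort C + Sort D)%type) : SemHom a b -> SemHom a b -> Prop :=
  match a, b return SemHom a b -> SemHom a b -> Prop with
  | inl c, inl c' => fun m m' => imor_eq m m'
  | inl c, inr d => fun t t' => teq (cinst P c) d t t'
  | inr d, inr d' => fun q q' => peq D d d' q q'
  | inr _, inl _ => fun _ _ => True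
  end.

Definition sem_id (a : (Sort C + Sort D)%type) : SemHom a a :=
  match a return SemHom a a with inl c => iid (cinst P c) | inr d => pnil d end.

Definition sem_comp (a b c : (Sort C + Sort D)%type) :
  SemHom a b -> SemHom b c -> SemHom a c :=
  match a, b, c return SemHom a b -> SemHom b c -> SemHom a c with
  | inl _, inl _, inl _ => fun m1 m2 => icomp m1 m2
  | inl _, inl _, inr _ => fun m t => iext m t
  | inl _, inr _, inr _ => fun t q => tapp t q
  | inr _, inr _, inr _ => fun q q' => papp q q'
  | inr _, inl _, _ => fun e _ => match e with end
  | _, inr _, inl _ => fun _ e => match e with end
  end.

Definition sem_sym (s : TSym C D (ubar_fn P)) (b : (Sort C + Sort D)%type) :
  SemHom (tcod C D (ubar_cod P) s) b -> SemHom (tdom C D (ubar_dom P) s) b :=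
  match s as s0 return SemHom (tcod C D (ubar_cod P) s0) b -> SemHom (tdom C D (ubar_dom P) s0) b with
  | inl (inl f) =>
      match b as b0 return SemHom (inl (cod f)) b0 -> SemHom (inl (dom f)) b0 with
      | inl _ => fun m => icomp (cact P f) m
      | inr _ => fun t => iext (cact P f) t
      end
  | inl (inr x) =>
      match b as b0 return SemHom (inr (ubar_cod P x)) b0 -> SemHom (inl (ubar_dom P x)) b0 with
      | inl _ => fun e => match e with end
      | inr _ => fun q => mkTerm (projT2 x) q
      end
  | inr g =>
      match b as b0 return SemHom (inr (cod g)) b0 -> SemHom (inr (dom g)) b0 with
      | inl _ => fun e => match e with end
      | inr _ => fun q => pcons g q
      end
  end.

Fixpoint sem {a b} (p : UPath (Pbar P) a b) : SemHom a b :=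
  match p in path _ _ a0 b0 return SemHom a0 b0 with
  | pnil a0 => sem_id a0
  | @pcons _ _ _ _ s b0 p' => sem_sym s b0 (sem p')
  end.

Lemma SemRel_refl a b (x : SemHom a b) : SemRel a b x x.
Proof.
  destruct a, b; simpl; try exact I; try (intro; apply teq_refl); try apply teq_refl.
  apply peq_refl.
Qed.

Lemma SemRel_sym a b (x y : SemHom a b) : SemRel a b x y -> SemRel a b y x.
Proof.
  destruct a, b; simpl; auto; try (intros H z; apply teq_sym, H); try apply teq_sym.
  apply peq_sym.
Qed.

Lemma SemRel_trans a b (x y z : SemHom a b) :
  SemRel a b x y -> SemRel a b y z -> SemRel a b x z.
Proof.
  destruct a, b; simpl; auto.
  - intros H1 H2 w; eapply teq_trans; [apply H1 | apply H2].
  - intros; eapply teq_trans; eauto.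
  - intros; eapply peq_trans; eauto.
Qed.

Lemma sem_comp_id_l a c (x : SemHom a c) : SemRel a c x (sem_comp a a c (sem_id a) x).
Proof.
  destruct a, c; simpl; try exact I.
  - intro w. unfold icomp. rewrite iext_iid. apply teq_refl.
  - rewrite iext_iid. apply teq_refl.
  - apply peq_refl.
Qed.

Lemma sem_sym_comp (s : TSym C D (ubar_fn P)) b c
  (x : SemHom (tcod C D (ubar_cod P) s) b) (y : SemHom b c) :
  SemRel _ c (sem_sym s c (sem_comp _ b c x y)) (sem_comp _ b c (sem_sym s b x) y).
Proof.
  destruct s as [[f | [c0 g]] | g]; destruct b, c; simpl in *; try exact I;
    try solve [destruct x | destruct y].
  - intro w.
    change (teq _ _ (iext (cact P f) (iext x (y w))) (iext (icomp (cact P f) x) (y w))).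
    rewrite iext_icomp. apply teq_refl.
  - rewrite iext_icomp. apply teq_refl.
  - rewrite iext_tapp. apply teq_refl.
  - apply teq_refl.
  - apply peq_refl.
Qed.

Lemma sem_comp_SemRel_l a b c (x x' : SemHom a b) (y : SemHom b c) :
  SemRel a b x x' -> SemRel a c (sem_comp a b c x y) (sem_comp a b c x' y).
Proof.
  destruct a, b, c; simpl; try exact (fun _ => I); try solve [destruct x | destruct y].
  - intros H w. apply imor_eq_iext, H.
  - intros H. apply imor_eq_iext, H.
  - intros H. apply teq_tapp, H.
  - intros H. apply peq_papp_r, H.
Qed.

Hypothesis HP : curr_ok P.

Lemma sem_sym_SemRel (s : TSym C D (ubar_fn P)) b (x y : SemHom (tcod C D (ubar_cod P) s) b) :
  SemRel _ b x y -> SemRel _ b (sem_sym s b x) (sem_sym s b y).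
Proof.
  destruct s as [[f | [c0 g]] | g]; destruct b; simpl in *; try exact (fun _ => I);
    try solve [destruct x].
  - intros H w. apply iext_teq; [apply HP | apply H].
  - apply iext_teq, HP.
  - intros H. exact (peq_teq _ _ _ H (mkTerm g (pnil _))).
  - apply peq_pre.
Qed.

Lemma sem_papp {a b} (p : UPath (Pbar P) a b) :
  forall c (q : UPath (Pbar P) b c), SemRel a c (sem (papp p q)) (sem_comp a b c (sem p) (sem q)).
Proof.
  induction p as [a | s b p IH]; intros c q.
  - apply sem_comp_id_l.
  - eapply SemRel_trans; [apply sem_sym_SemRel, IH | apply sem_sym_comp].
Qed.

Lemma sem_liftC {c c'} (p : Path C c c') :
  sem (liftC C D (ubar_dom P) (ubar_cod P) p) = cpath P p.
Proof. induction p; simpl; [reflexivity | now rewrite IHp]. Qed.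

Lemma sem_liftD {d d'} (q : Path D d d') : sem (liftD C D (ubar_dom P) (ubar_cod P) q) = q.
Proof. induction q; simpl; [reflexivity | now rewrite IHq]. Qed.

Lemma sem_tbar {c d} (t : ITerm (cinst P c) d) : sem (tbar P t) = t.
Proof. destruct t; unfold tbar; simpl. now rewrite sem_liftD. Qed.

Lemma peq_sem a b (u v : UPath (Pbar P) a b) :
  peq (tot (Pbar P)) a b u v -> SemRel a b (sem u) (sem v).
Proof.
  induction 1.
  - destruct e as [[e | [[c e] | [f x]]] | e].
    + change (imor_eq (sem (liftC C D (ubar_dom P) (ubar_cod P) (eqn_lhs e)))
                      (sem (liftC C D (ubar_dom P) (ubar_cod P) (eqn_rhs e)))).
      rewrite !sem_liftC. apply HP.
    + change (teq (cinst P c) _ (sem (tbar P (ieqn_lhs (cinst P c) e)))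
                                (sem (tbar P (ieqn_rhs (cinst P c) e)))).
      rewrite !sem_tbar. apply teq_ax.
    + change (teq (cinst P (dom f)) _ (iext (cact P f) (sem (tbar P (tgenerator _ x))))
                 (sem (tbar P (cact P f x)))).
      rewrite !sem_tbar. unfold iext; simpl. rewrite tapp_pnil. apply teq_refl.
    + change (peq D _ _ (sem (liftD C D (ubar_dom P) (ubar_cod P) (eqn_lhs e)))
                        (sem (liftD C D (ubar_dom P) (ubar_cod P) (eqn_rhs e)))).
      rewrite !sem_liftD. apply peq_ax.
  - apply SemRel_refl.
  - apply SemRel_sym; auto.
  - eapply SemRel_trans; eauto.
  - apply sem_sym_SemRel; auto.
  - eapply SemRel_trans; [apply sem_papp |].
    eapply SemRel_trans; [| apply SemRel_sym, sem_papp].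
    now apply sem_comp_SemRel_l.
Qed.

(* Induction on paths of |P̄| needs a motive over all pairs of endpoints; only
   cross paths and D-paths carry content. *)
Definition tbar_sem_spec a b : UPath (Pbar P) a b -> Prop :=
  match a, b return UPath (Pbar P) a b -> Prop with
  | inl c, inr d => fun u => ueq (Pbar P) c d (tbar P (sem u)) u
  | inr d, inr d' => fun u => liftD C D (ubar_dom P) (ubar_cod P) (sem u) = u
  | _, _ => fun _ => True
  end.

Lemma tbar_sem_spec_all a b (u : UPath (Pbar P) a b) : tbar_sem_spec a b u.
Proof.
  induction u as [[c | d] | s b u IH]; simpl; try exact I; try reflexivity.
  destruct s as [[f | [c0 g]] | g]; destruct b; simpl in *; try exact I.
  - eapply peq_trans; [apply peq_sym, tbar_cact |].
    exact (peq_pre (tot (Pbar P)) (inl (inl f)) _ _ _ IH).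
  - unfold ueq. rewrite <- IH at 2. apply peq_refl.
  - now rewrite IH.
Qed.

Lemma tbar_sem {c d} (u : UPath (Pbar P) (inl c) (inr d)) :
  ueq (Pbar P) c d (tbar P (sem u)) u.
Proof. exact (tbar_sem_spec_all _ _ u). Qed.

Lemma sem_uact {c' c d d'} (p : Path C c' c) (u : UPath (Pbar P) (inl c) (inr d))
  (q : Path D d d') :
  teq (cinst P c') d' (sem (uact (Pbar P) p u q)) (cact_t P p (sem u) q).
Proof.
  unfold uact, cact_t.
  eapply teq_trans; [exact (sem_papp (liftC C D (ubar_dom P) (ubar_cod P) p) (inr d') _) |].
  simpl. rewrite sem_liftC, <- iext_tapp.
  apply iext_teq; [now apply cpath_ok |].
  eapply teq_trans; [exact (sem_papp u (inr d') _) |].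
  simpl. rewrite sem_liftD. apply teq_refl.
Qed.

Lemma sem_tbar_prof_iso : prof_iso P (fun c d u => sem u) (fun c d t => tbar P t).
Proof.
  repeat split.
  - intros c d u v H. exact (peq_sem _ _ u v H).
  - intros c d t t'. apply tbar_teq.
  - intros c d u. apply tbar_sem.
  - intros c d t. rewrite sem_tbar. apply teq_refl.
  - intros c c' d d' p q u. apply sem_uact.
Qed.

End Uncurrying.

Section UncurryingMorphisms.
Context {C D : CatPres} {P P' : Curr C D} (F : CMor P P').

Lemma uext_tbar {c d} (t : ITerm (cinst P c) d) :
  uext (ubar_mor F) (tbar P t) = tbar P' (iext (F c) t).
Proof.
  destruct t as [g q]. unfold tbar at 1; simpl.
  rewrite (uext_liftD (P := Pbar P) (P' := Pbar P')).
  unfold ubar_mor, iext; simpl. now rewrite tbar_tapp.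
Qed.

Lemma ubar_mor_ok : cmor_ok F -> umor_ok (ubar_mor F).
Proof.
  intros [HFc HFf] e.
  destruct e as [[e | [[c e] | [f x]]] | e].
  - change (peq (tot (Pbar P')) _ _
      (uext (ubar_mor F) (liftC C D (ubar_dom P) (ubar_cod P) (eqn_lhs e)))
      (uext (ubar_mor F) (liftC C D (ubar_dom P) (ubar_cod P) (eqn_rhs e)))).
    rewrite !(uext_liftC (P := Pbar P) (P' := Pbar P')).
    exact (peq_ax (tot (Pbar P')) (inl (inl e))).
  - change (ueq (Pbar P') c _ (uext (ubar_mor F) (tbar P (ieqn_lhs (cinst P c) e)))
                              (uext (ubar_mor F) (tbar P (ieqn_rhs (cinst P c) e)))).
    rewrite !uext_tbar. apply tbar_teq, HFc.
  - change (ueq (Pbar P') (dom f) _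
      (@pcons _ _ (tdom C D (ubar_dom P')) (tcod C D (ubar_cod P')) (inl (inl f)) _
         (uext (ubar_mor F) (tbar P (tgenerator (cinst P (cod f)) x))))
      (uext (ubar_mor F) (tbar P (cact P f x)))).
    rewrite !uext_tbar.
    eapply peq_trans; [apply tbar_cact |].
    apply peq_sym, tbar_teq.
    replace (iext (F (cod f)) (tgenerator _ x)) with (F (cod f) x)
      by (unfold iext; symmetry; apply tapp_pnil).
    exact (HFf f x).
  - change (peq (tot (Pbar P')) _ _
      (uext (ubar_mor F) (liftD C D (ubar_dom P) (ubar_cod P) (eqn_lhs e)))
      (uext (ubar_mor F) (liftD C D (ubar_dom P) (ubar_cod P) (eqn_rhs e)))).
    rewrite !(uext_liftD (P := Pbar P) (P' := Pbar P')).
    exact (peq_ax (tot (Pbar P')) (inr e)).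
Qed.

Lemma ubar_mor_eq (G : CMor P P') : cmor_eq F G -> umor_eq (ubar_mor F) (ubar_mor G).
Proof. intros H [c g]. apply tbar_teq, H. Qed.

Lemma sem_ubar_mor_natural : curr_ok P' -> cmor_ok F ->
  forall c d (u : UPath (Pbar P) (inl c) (inr d)),
    teq (cinst P' c) d (sem P' (uext (ubar_mor F) u)) (iext (F c) (sem P u)).
Proof.
  intros HP' HF c d u.
  assert (Hu : ueq (Pbar P') c d (uext (ubar_mor F) (tbar P (sem P u))) (uext (ubar_mor F) u)).
  { apply uext_peq; [now apply ubar_mor_ok | apply tbar_sem]. }
  rewrite uext_tbar in Hu.
  apply peq_sem in Hu; [| exact HP'].
  change (teq (cinst P' c) d (sem P' (tbar P' (iext (F c) (sem P u))))
                             (sem P' (uext (ubar_mor F) u))) in Hu.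
  rewrite sem_tbar in Hu. now apply teq_sym.
Qed.

End UncurryingMorphisms.

Lemma ubar_mor_cid {C D : CatPres} (P : Curr C D) x : ubar_mor (cid P) x = uid (Pbar P) x.
Proof. destruct x; reflexivity. Qed.

Lemma ubar_mor_ccomp {C D : CatPres} {P P' P'' : Curr C D} (F : CMor P P') (G : CMor P' P'') x :
  ubar_mor (ccomp G F) x = ucomp (ubar_mor G) (ubar_mor F) x.
Proof. destruct x as [c g]. unfold ucomp. symmetry. exact (uext_tbar G (F c g)). Qed.

Lemma Finite_type_sum (A B : Type) :
  Finite_type A -> Finite_type B -> Finite_type (A + B)%type.
Proof.
  intros [la Ha] [lb Hb]. exists (map inl la ++ map inr lb).
  intros [a | b]; apply in_or_app; [left | right]; apply in_map; auto.
Qed.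

Lemma Finite_type_sigT (A : Type) (B : A -> Type) :
  Finite_type A -> (forall a, Finite_type (B a)) -> Finite_type {a : A & B a}.
Proof.
  intros [la Ha] HB.
  assert (H : exists l : list {a : A & B a}, forall a, In a la -> forall b, In (existT _ a b) l).
  { clear Ha. induction la as [| a0 la IH].
    - exists []. intros a [].
    - destruct IH as [l Hl]. destruct (HB a0) as [lb Hlb].
      exists (map (existT _ a0) lb ++ l). intros a [<- | Hin] b; apply in_or_app.
      + left. apply in_map, Hlb.
      + right. auto. }
  destruct H as [l Hl]. exists l. intros [a b]. apply Hl, Ha.
Qed.

Lemma Pbar_finite {C D : CatPres} (P : Curr C D) :
  Finite_type (Sort C) -> Finite_type (Fn C) -> (forall c, fin_inst (cinst P c)) ->
  fin_uncurr (Pbar P).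
Proof.
  intros HS HF HI. split; simpl.
  - apply Finite_type_sigT; auto. intros c; apply HI.
  - apply Finite_type_sum; apply Finite_type_sigT; auto; intros; apply HI.
Qed.

Theorem mainTheorem11 (C D : CatPres) :
  (* overline F is a morphism of UnCurr(C,D) *)
  (forall (P P' : Curr C D) (F : CMor P P'),
      curr_ok P -> curr_ok P' -> cmor_ok F -> umor_ok (ubar_mor F)) /\
  (* preservation of identities *)
  (forall (P : Curr C D), curr_ok P ->
      forall x, ubar_mor (cid P) x = uid (Pbar P) x) /\
  (* preservation of composition *)
  (forall (P P' P'' : Curr C D) (F : CMor P P') (G : CMor P' P''),
      curr_ok P -> curr_ok P' -> curr_ok P'' -> cmor_ok F -> cmor_ok G ->
      forall x, ubar_mor (ccomp G F) x = ucomp (ubar_mor G) (ubar_mor F) x) /\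
  (* preservation of provable equality of morphisms *)
  (forall (P P' : Curr C D) (F G : CMor P P'),
      curr_ok P -> curr_ok P' -> cmor_ok F -> cmor_ok G ->
      cmor_eq F G -> umor_eq (ubar_mor F) (ubar_mor G)) /\
  (* isomorphism [[Pbar]] ~= [[P]] in Prof([[C]],[[D]]), natural in P *)
  (exists (alpha : forall (P : Curr C D) c d, UPath (Pbar P) (inl c) (inr d) -> ITerm (cinst P c) d)
          (beta : forall (P : Curr C D) c d, ITerm (cinst P c) d -> UPath (Pbar P) (inl c) (inr d)),
      (forall P : Curr C D, curr_ok P -> prof_iso P (alpha P) (beta P)) /\
      (forall (P P' : Curr C D) (F : CMor P P'),
          curr_ok P -> curr_ok P' -> cmor_ok F ->
          forall c d (u : UPath (Pbar P) (inl c) (inr d)),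
            teq (cinst P' c) d (alpha P' c d (uext (ubar_mor F) u)) (iext (F c) (alpha P c d u)))) /\
  (* restriction to FinCurr(C,D) -> FinUnCurr(C,D) for finite C, D *)
  (fin_cat C -> fin_cat D ->
      forall P : Curr C D, curr_ok P -> (forall c, fin_inst (cinst P c)) -> fin_uncurr (Pbar P)).
Proof.
  split; [intros P P' F _ _; apply ubar_mor_ok |].
  split; [intros P _; apply ubar_mor_cid |].
  split; [intros; apply ubar_mor_ccomp |].
  split; [intros P P' F G _ _ _ _; apply ubar_mor_eq |].
  split.
  - exists (fun P c d u => sem P u), (fun P c d t => tbar P t). split.
    + intros P HP. now apply sem_tbar_prof_iso.
    + intros P P' F _. apply sem_ubar_mor_natural.
  - intros [HS [HF _]] _ P _. now apply Pbar_finite.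
Qed.
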